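(* Let $\Psi(x)=\sup\left\{\lfloor t\rfloor\log\left(1+\frac{x}{t^2}\right):t\geq1\right\}$ for $x\geq0$. Then \[ \Psi(x)\geq\frac{\log 5}{4}\min(x;\sqrt x)\qquad\text{for all }x\geq0. \] *)

From Stdlib Require Import Reals.
Open Scope R_scope.

Definition Psi_set (x : R) : R -> Prop :=
  fun y => exists t : R, 1 <= t /\ y = IZR (Int_part t) * ln (1 + x / (t ^ 2)).

Definition is_Psi (x L : R) : Prop := is_lub (Psi_set x) L.

(* For x <= 4 take t = 1: the Pade bound ln (1 + x) >= 2x / (2 + x) is at
   least min(x, sqrt x) / 2, and ln 5 <= 2.  For x >= 4 take t = sqrt x / 2, so
   that x / t^2 = 4 and the term is floor(t) ln 5 >= (t / 2) ln 5. *)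

From Stdlib Require Import Reals Lra Lia.
From Coquelicot Require Import Coquelicot.
Open Scope R_scope.

Lemma ln_1p_ge_pade (x : R) : 0 <= x -> 2 * x / (2 + x) <= ln (1 + x).
Proof.
  intros Hx.
  set (f t := ln (1 + t) - 2 * t / (2 + t)).
  set (df t := t ^ 2 / ((1 + t) * (2 + t) ^ 2)).
  destruct (MVT_gen f 0 x df) as (c & Hc & Hmvt);
    rewrite ?Rmin_left, ?Rmax_right in * by lra.
  - intros t Ht; unfold f, df; auto_derive; [lra | field; lra].
  - intros t Ht.
    apply continuity_pt_filterlim, (ex_derive_continuous (V := R_NormedModule)).
    unfold f; auto_derive; lra.
  - assert (Hdf : 0 <= df c).
    { unfold df; apply Rmult_le_pos; [nra | left; apply Rinv_0_lt_compat; nra]. }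
    unfold f in Hmvt; rewrite Rplus_0_r, ln_1 in Hmvt.
    nra.
Qed.

Lemma half_min_sqrt_le_pade (x : R) : 0 <= x <= 4 ->
  Rmin x (sqrt x) / 2 <= 2 * x / (2 + x).
Proof.
  intros Hx.
  apply (Rmult_le_reg_r (2 + x)); [lra|].
  replace (2 * x / (2 + x) * (2 + x)) with (2 * x) by (field; lra).
  destruct (Rle_or_lt x 2) as [Hx2 | Hx2].
  - pose proof (Rmin_l x (sqrt x)); nra.
  - pose proof (Rmin_r x (sqrt x)).
    pose proof (sqrt_pos x); pose proof (pow2_sqrt x (proj1 Hx)).
    assert (1 <= sqrt x <= 2) by nra.
    nra.
Qed.

Lemma ln5_pos : 0 < ln 5.
Proof. rewrite <- ln_1; apply ln_increasing; lra. Qed.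

Lemma ln5_le_2 : ln 5 <= 2.
Proof.
  rewrite <- (ln_exp 2); apply ln_le; [lra|].
  replace 2 with (/2 + /2 + /2 + /2) by lra.
  rewrite !exp_plus.
  assert (He : 3 / 2 <= exp (/2)) by (pose proof (exp_ineq1_le (/2)); lra).
  assert (He2 : 9 / 4 <= exp (/2) * exp (/2)) by nra.
  nra.
Qed.

Lemma Int_part_ge_half (t : R) : 1 <= t -> t / 2 <= IZR (Int_part t).
Proof.
  intros Ht.
  destruct (base_Int_part t) as [Hle Hgt].
  assert (Hpos : (1 <= Int_part t)%Z).
  { cut (0 < Int_part t)%Z; [lia|]. apply lt_0_IZR; lra. }
  apply IZR_le in Hpos.
  lra.
Qed.

Lemma is_Psi_ge (x L t : R) : is_Psi x L -> 1 <= t ->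
  IZR (Int_part t) * ln (1 + x / t ^ 2) <= L.
Proof.
  intros [Hub _] Ht.
  apply Hub; now exists t.
Qed.

Lemma is_Psi_ge_ln_1p (x L : R) : is_Psi x L -> ln (1 + x) <= L.
Proof.
  intros HL.
  assert (Hint : Int_part 1 = 1%Z) by (symmetry; apply Int_part_spec; lra).
  pose proof (is_Psi_ge x L 1 HL (Rle_refl 1)) as H.
  rewrite Hint, pow1, Rdiv_1_r, Rmult_1_l in H.
  exact H.
Qed.

Lemma is_Psi_ge_sqrt (x L : R) : 4 <= x -> is_Psi x L -> ln 5 / 4 * sqrt x <= L.
Proof.
  intros Hx HL.
  assert (Hs : 2 <= sqrt x).
  { pose proof (sqrt_pos x); pose proof (pow2_sqrt x ltac:(lra)); nra. }
  set (t := sqrt x / 2).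
  assert (Ht : 1 <= t) by (unfold t; lra).
  assert (Hdiv : x / t ^ 2 = 4).
  { unfold t; replace ((sqrt x / 2) ^ 2) with (sqrt x ^ 2 / 4) by field.
    rewrite pow2_sqrt by lra; field; lra. }
  pose proof (is_Psi_ge x L t HL Ht) as H.
  rewrite Hdiv in H; replace (1 + 4) with 5 in H by lra.
  pose proof (Rmult_le_compat_r (ln 5) _ _ (Rlt_le _ _ ln5_pos) (Int_part_ge_half t Ht)).
  unfold t in *; lra.
Qed.

Theorem lemma1p10 : forall x L : R, 0 <= x -> is_Psi x L ->
  L >= ln 5 / 4 * Rmin x (sqrt x).
Proof.
  intros x L Hx HL.
  pose proof ln5_pos.
  assert (Hmin : 0 <= Rmin x (sqrt x)) by (apply Rmin_glb; [lra | apply sqrt_pos]).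
  apply Rle_ge.
  destruct (Rle_or_lt x 4) as [Hx4 | Hx4].
  - pose proof ln5_le_2.
    pose proof (half_min_sqrt_le_pade x (conj Hx Hx4)).
    pose proof (ln_1p_ge_pade x Hx).
    pose proof (is_Psi_ge_ln_1p x L HL).
    nra.
  - pose proof (Rmin_r x (sqrt x)).
    pose proof (is_Psi_ge_sqrt x L (Rlt_le _ _ Hx4) HL).
    nra.
Qed.
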